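(* Let $A$ and $C$ be groups, and let $C$ act on $A$ by automorphisms in such a way that the induced action of $C$ on the abelianization $A/[A,A]$ is trivial. Then for every $m\geq 1$, $$\Gamma_m(A\rtimes C)=\Gamma_m(A)\rtimes\Gamma_m(C)\quad\text{and}\quad D_m(A\rtimes C)=D_m(A)\rtimes D_m(C).$$
   Context: For a group $G$, the lower central series is defined by $\Gamma_1(G)=G$ and $\Gamma_i(G)=[\Gamma_{i-1}(G),G]$ for $i\ge 2$. The rational lower central series is defined by $D_1(G)=G$ and, for $i\geq 2$, $D_i(G)=\{x\in G \mid x^k\in\Gamma_i(G)\text{ for some integer }k\geq 1\}$. Here $A\rtimes C$ is the semidirect product defined by the given action, and $A$, $C$ are viewed as subgroups of it. *)

From HB Require Import structures.
From mathcomp Require Import all_boot.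

Set Implicit Arguments.
Unset Strict Implicit.
Unset Printing Implicit Defensive.

Local Open Scope group_scope.

Inductive gen_sub (G : groupType) (S : G -> Prop) : G -> Prop :=
  | gen_base x : S x -> gen_sub S x
  | gen_one : gen_sub S 1
  | gen_mul x y : gen_sub S x -> gen_sub S y -> gen_sub S (x * y)
  | gen_inv x : gen_sub S x -> gen_sub S x^-1.

Definition comm_sub (G : groupType) (H : G -> Prop) : G -> Prop :=
  gen_sub (fun z => exists x y, H x /\ z = [~ x, y]).

(* Lower central series: lcs G 1 = G, lcs G (i+1) = [lcs G i, G]
   (lcs G 0 = G is an irrelevant convention). *)
Fixpoint lcs (G : groupType) (n : nat) : G -> Prop :=
  match n with
  | 0 | 1 => fun _ => True
  | S p => comm_sub (@lcs G p)
  end.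

Definition rlcs (G : groupType) (n : nat) : G -> Prop :=
  fun x => exists k : nat, (1 <= k)%N /\ @lcs G n (x ^+ k).

Record aut_action (A C : groupType) := AutAction {
  act :> C -> A -> A;
  act_morph : forall c a b, act c (a * b) = act c a * act c b;
  act_one : forall a, act 1 a = a;
  act_mul : forall c d a, act (c * d) a = act c (act d a)
}.

Section Sdprod.
Variables (A C : groupType) (phi : aut_action A C).

Definition sdprod (psi : aut_action A C) : Type := (A * C)%type.
HB.instance Definition _ := Choice.on (sdprod phi).

Definition sd_one : sdprod phi := (1, 1).
Definition sd_mul (x y : sdprod phi) : sdprod phi := (x.1 * phi x.2 y.1, x.2 * y.2).
Definition sd_inv (x : sdprod phi) : sdprod phi := (phi x.2^-1 x.1^-1, x.2^-1).

Lemma act_1 c : phi c 1 = 1.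
Proof.
apply: (@mulIg _ (phi c 1)); rewrite -act_morph !mul1g //.
Qed.

Lemma sd_mulA : associative sd_mul.
Proof.
move=> [a c] [a' c'] [a'' c'']; rewrite /sd_mul /=.
by rewrite act_morph act_mul !mulgA.
Qed.

Lemma sd_mul1 : left_id sd_one sd_mul.
Proof. by move=> [a c]; rewrite /sd_mul /= act_one !mul1g. Qed.

Lemma sd_mulg1 : right_id sd_one sd_mul.
Proof. by move=> [a c]; rewrite /sd_mul /= act_1 !mulg1. Qed.

Lemma sd_mulV : left_inverse sd_one sd_inv sd_mul.
Proof.
by move=> [a c]; rewrite /sd_mul /sd_inv /= -act_morph mulVg act_1 mulVg.
Qed.

Lemma sd_mulgV : right_inverse sd_one sd_inv sd_mul.
Proof.
by move=> [a c]; rewrite /sd_mul /sd_inv /= -act_mul !mulgV act_one mulgV.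
Qed.

HB.instance Definition _ :=
  isGroup.Build (sdprod phi) sd_mulA sd_mul1 sd_mulg1 sd_mulV sd_mulgV.

End Sdprod.


(* The subgroup H |x K = {(a, c) | a in H, c in K} of A ><| C, i.e. the
   internal semidirect product of H <= A and K <= C. *)
Definition sd_sub (A C : groupType) (phi : aut_action A C)
  (H : A -> Prop) (K : C -> Prop) : sdprod phi -> Prop :=
  fun x => H x.1 /\ K x.2.

Arguments lcs : clear implicits.
Arguments rlcs : clear implicits.
Arguments sd_sub {A C} phi H K _.

(* Write G = A ><| C. The subgroups Gamma_i(A) ><| 1 form a central filtration
   of G: the only nontrivial point is [Gamma_i(A), C] <= Gamma_(i+1)(A), which follows
   from the hypothesis (the case i = 1) by the three subgroups lemma.  A second
   use of the three subgroups lemma gives [A, Gamma_n(G)] <= Gamma_(n+1)(A), so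
   Gamma_n(A) ><| Gamma_n(C) is a central filtration too, hence contains
   Gamma_n(G); the converse inclusion is clear.
   For D_n the key fact is that D_n(G) is a subgroup, i.e. that the torsion
   elements of the nilpotent group G / Gamma_n(G) form a subgroup.  Then
   (a, c) lies in D_n(G) iff c lies in D_n(C) (project onto C) and
   (a, 1) = (a, c) (1, c)^-1 lies in D_n(G), i.e. a lies in D_n(A). *)

From HB Require Import structures.
From mathcomp Require Import all_boot.

Set Implicit Arguments.
Unset Strict Implicit.
Unset Printing Implicit Defensive.

Local Open Scope group_scope.

Section CommutatorIdentities.
Variable X : groupType.
Implicit Types x y z : X.

Lemma conjg_mulR x y : x ^ y = x * [~ x, y].
Proof. by rewrite mulVKg. Qed.

Lemma commMgJ x y z : [~ x * y, z] = [~ x, z] ^ y * [~ y, z].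
Proof. by rewrite !commgEr conjgM mulgA -conjMg mulgK. Qed.

Lemma commgMJ x y z : [~ x, y * z] = [~ x, z] * [~ x, y] ^ z.
Proof. by rewrite !commgEl conjgM -mulgA -conjMg mulVKg. Qed.

Lemma commVgJ x y : [~ x^-1, y] = ([~ x, y] ^ x^-1)^-1.
Proof. by rewrite /commg /conjg !gnorm. Qed.

Lemma Hall_Witt_identity x y z :
  [~ x, y^-1, z] ^ y * [~ y, z^-1, x] ^ z * [~ z, x^-1, y] ^ x = 1.
Proof. by rewrite /commg /conjg !gnorm. Qed.

End CommutatorIdentities.

Section Subgroups.
Variable X : groupType.
Implicit Types (x y g : X) (S K M N P : X -> Prop).

Record subgroup P : Prop := Subgroup {
  subgroup1 : P 1;
  subgroupM : forall x y, P x -> P y -> P (x * y);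
  subgroupV : forall x, P x -> P x^-1
}.

Definition normalizes K N := forall z g, N z -> K g -> N (z ^ g).

Definition normal N := forall z g, N z -> N (z ^ g).

Lemma normal_normalizes K N : normal N -> normalizes K N.
Proof. by move=> nN z g Nz _; apply: nN. Qed.

Lemma subgroupT : subgroup (fun _ : X => True).
Proof. by []. Qed.

Section SubgroupTheory.
Variables (P : X -> Prop) (sP : subgroup P).

Lemma subgroupX x n : P x -> P (x ^+ n).
Proof.
move=> Px; elim: n => [|n IHn]; first exact: (subgroup1 sP).
by rewrite expgS; apply: (subgroupM sP).
Qed.

Lemma subgroupJ x g : P x -> P g -> P (x ^ g).
Proof.
move=> Px Pg; rewrite conjgE.
by apply: (subgroupM sP); [apply: (subgroupV sP) | apply: (subgroupM sP)].
Qed.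

Lemma subgroupR x g : P x -> P g -> P [~ x, g].
Proof.
move=> Px Pg; rewrite commgEl.
by apply: (subgroupM sP); [apply: (subgroupV sP) | apply: subgroupJ].
Qed.

End SubgroupTheory.

Lemma gen_sub_subgroup S : subgroup (gen_sub S).
Proof. by split; [apply: gen_one | apply: gen_mul | apply: gen_inv]. Qed.

Lemma gen_sub_min S P : subgroup P -> (forall x, S x -> P x) ->
  forall z, gen_sub S z -> P z.
Proof.
move=> [P1 PM PV] SP z; elim=> // *; [exact: PM | exact: PV].
Qed.

Lemma gen_sub_mono S T : (forall x, S x -> T x) ->
  forall z, gen_sub S z -> gen_sub T z.
Proof.
by move=> ST; apply: gen_sub_min; [apply: gen_sub_subgroup | move=> x /ST /gen_base].
Qed.

Lemma gen_sub_normalizes K S : (forall z g, S z -> K g -> S (z ^ g)) ->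
  normalizes K (gen_sub S).
Proof.
move=> SJ z g Sz Kg; move: z Sz.
apply: (gen_sub_min (P := fun z => gen_sub S (z ^ g))) => [|x Sx]; last exact/gen_base/SJ.
split=> [|x y|x]; rewrite ?conj1g ?conjMg ?conjVg.
- exact: gen_one.
- exact: gen_mul.
- exact: gen_inv.
Qed.

Lemma gen_sub_normal S : (forall z g, S z -> S (z ^ g)) -> normal (gen_sub S).
Proof.
move=> SJ z g Sz; apply: (gen_sub_normalizes (K := fun _ => True)) => //.
by move=> w h Sw _; apply: SJ.
Qed.

(* Reduces [u, t] in M, for u in a subgroup generated inside K, to generators. *)
Lemma commg_subgroup K M t : subgroup K -> subgroup M -> normalizes K M ->
  subgroup (fun u => K u /\ M [~ u, t]).
Proof.
move=> sK sM nM; split.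
- by rewrite comm1g; split; [apply: (subgroup1 sK) | apply: (subgroup1 sM)].
- move=> x y [Kx Mx] [Ky My]; split; first exact: (subgroupM sK).
  by rewrite commMgJ; apply: (subgroupM sM) => //; apply: nM.
- move=> x [Kx Mx]; split; first exact: (subgroupV sK).
  by rewrite commVgJ; apply/(subgroupV sM)/nM => //; apply: (subgroupV sK).
Qed.

Lemma hall_witt_normal N x y z : subgroup N -> normal N ->
  N [~ y, z^-1, x] -> N [~ z, x^-1, y] -> N [~ x, y^-1, z].
Proof.
move=> sN nN Nyzx Nzxy.
have := Hall_Witt_identity x y z.
rewrite -mulgA => /mulg1_eq/(congr1 (fun w => (w ^ y^-1)^-1)).
rewrite conjVg invgK conjgK => ->.
by apply/(subgroupV sN)/nN/(subgroupM sN); apply: nN.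
Qed.

End Subgroups.

Section Morphisms.
Variables (X Y : groupType) (f : X -> Y).
Hypothesis fM : {morph f : x y / x * y}.

Lemma morph1 : f 1 = 1.
Proof. by apply: (@mulIg _ (f 1)); rewrite -fM !mul1g. Qed.

Lemma morphV x : f x^-1 = (f x)^-1.
Proof. by apply/esym/mulg1_eq; rewrite -fM mulgV morph1. Qed.

Lemma morphJ x y : f (x ^ y) = f x ^ f y.
Proof. by rewrite !conjgE !fM morphV. Qed.

Lemma morphR x y : f [~ x, y] = [~ f x, f y].
Proof. by rewrite !commgEl fM morphV morphJ. Qed.

Lemma morphX x n : f (x ^+ n) = f x ^+ n.
Proof. by elim: n => [|n IHn]; rewrite ?morph1 // !expgS fM IHn. Qed.

Lemma subgroup_preim P : subgroup P -> subgroup (fun x => P (f x)).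
Proof.
move=> sP; split=> [|x y Px Py|x Px]; rewrite ?morph1 ?fM ?morphV.
- exact: (subgroup1 sP).
- exact: (subgroupM sP).
- exact: (subgroupV sP).
Qed.

Lemma gen_sub_morph (S : X -> Prop) (T : Y -> Prop) :
  (forall s, S s -> T (f s)) -> forall z, gen_sub S z -> gen_sub T (f z).
Proof.
move=> ST; apply: (gen_sub_min (subgroup_preim (gen_sub_subgroup T))).
by move=> s /ST /gen_base.
Qed.

Lemma lcs_morph n z : lcs X n z -> lcs Y n (f z).
Proof.
elim: n z => [|[|n] IHn] z //=; apply: gen_sub_morph => _ [x [y [Hx ->]]].
by exists (f x), (f y); rewrite morphR; split=> //; apply: IHn.
Qed.

Lemma rlcs_morph n z : rlcs X n z -> rlcs Y n (f z).
Proof. by case=> k [k_gt0 Hk]; exists k; rewrite -morphX; split=> //; apply: lcs_morph. Qed.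

End Morphisms.

Section LowerCentralSeries.
Variable X : groupType.
Implicit Types x y u v : X.

Lemma lcs_subgroup n : subgroup (lcs X n).
Proof. by case: n => [|[|n]] //=; apply: gen_sub_subgroup. Qed.

Lemma lcs_normal n : normal (lcs X n).
Proof.
elim: n => [|[|n] IHn] //=; apply: gen_sub_normal => _ g [x [y [Hx ->]]].
by exists (x ^ g), (y ^ g); rewrite conjRg; split=> //; apply: IHn.
Qed.

Lemma lcs_commg n x y : lcs X n x -> lcs X n.+1 [~ x, y].
Proof. by case: n => [|n] //= Hx; apply: gen_base; exists x, y. Qed.

Record central_filtration (F : nat -> X -> Prop) : Prop := CentralFiltration {
  cf_subgroup : forall i, subgroup (F i);
  cf_normal : forall i, normal (F i);
  cf_commg : forall i u y, F i u -> F i.+1 [~ u, y]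
}.

Lemma lcs_central_filtration : central_filtration (lcs X).
Proof. by split; [apply: lcs_subgroup | apply: lcs_normal | apply: lcs_commg]. Qed.

(* The three subgroups lemma, by induction on j through the Hall-Witt identity. *)
Lemma central_filtration_commg_lcs F : central_filtration F ->
  forall j i u v, F i u -> lcs X j.+1 v -> F (i + j.+1) [~ u, v].
Proof.
move=> [sF nF cF]; elim=> [|j IHj] i u v Fu; first by rewrite addn1 => _; apply: cF.
have sFij := sF (i + j.+2); have nFij := nF (i + j.+2).
rewrite -invgR => Hv; apply: (subgroupV sFij).
have [] // := gen_sub_min (commg_subgroup u (@subgroupT X) sFij
  (normal_normalizes nFij)) _ Hv.
move=> _ [w [g [Hw ->]]]; have {}Hw : lcs X j.+1 w := Hw.
split=> //; rewrite -[g]invgK; apply: hall_witt_normal => //.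
  rewrite -addSnnS; apply: IHj Hw; rewrite -invgR.
  by apply/(subgroupV (sF _))/cF/(subgroupV (sF _)).
by rewrite addnS; apply/cF/IHj => //; apply: (subgroupV (lcs_subgroup _)).
Qed.

Lemma lcs_commg_lcs i j u v :
  lcs X i u -> lcs X j.+1 v -> lcs X (i + j.+1) [~ u, v].
Proof. exact: (central_filtration_commg_lcs lcs_central_filtration). Qed.

Lemma lcs_sub_filtration F :
  (forall i, subgroup (F i)) -> (forall i u y, F i u -> F i.+1 [~ u, y]) ->
  (forall x, F 0 x) -> (forall x, F 1%N x) -> forall n x, lcs X n x -> F n x.
Proof.
move=> sF cF F0 F1; elim=> [|[|n] IHn] x //=.
apply: gen_sub_min (sF _) _ x => _ [u [y [Hu ->]]].
by apply/cF/IHn.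
Qed.

End LowerCentralSeries.

Section RationalLowerCentralSeries.
Variable X : groupType.
Implicit Types (x y u v g : X) (K N : X -> Prop).

Fixpoint lcs_in K n : X -> Prop :=
  match n with
  | 0 | 1 => K
  | p.+1 => gen_sub (fun z => exists u k, [/\ lcs_in K p u, K k & z = [~ u, k]])
  end.

(* [rlcs X n] unfolds to [torsion_mod (lcs X n)]. *)
Definition torsion_mod N x := exists k, (1 <= k)%N /\ N (x ^+ k).

Definition eqmod N u v := N (u^-1 * v).

Lemma lcs_in_whole n x : lcs_in (fun _ => True) n x <-> lcs X n x.
Proof.
elim: n x => [|[|n] IHn] x //=.
split; apply: gen_sub_mono => z [u [k]].
  by case=> Hu _ ->; exists u, k; split=> //; apply/IHn.
by case=> Hu ->; exists u, k; split=> //; apply/IHn.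
Qed.

Section LcsIn.
Variables (K : X -> Prop) (sK : subgroup K).

Lemma lcs_in_subgroup n : subgroup (lcs_in K n).
Proof. by case: n => [|[|n]] //=; apply: gen_sub_subgroup. Qed.

Lemma lcs_in_sub n z : lcs_in K n z -> K z.
Proof.
elim: n z => [|[|n] IHn] z //=; apply: gen_sub_min => // _ [u [k [Hu Hk ->]]].
by apply: subgroupR => //; apply: IHn.
Qed.

Lemma lcs_in_normalizes n : normalizes K (lcs_in K n).
Proof.
elim: n => [|[|n] IHn] /=; try by move=> z g Kz Kg; apply: subgroupJ.
apply: gen_sub_normalizes => _ g [u [k [Hu Hk ->]]] Kg.
by exists (u ^ g), (k ^ g); rewrite conjRg; split; [apply: IHn | apply: subgroupJ |].
Qed.

Lemma lcs_in_commg n u k : lcs_in K n.+1 u -> K k -> lcs_in K n.+2 [~ u, k].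
Proof. by move=> Hu Hk; apply: gen_base; exists u, k. Qed.

End LcsIn.

Section Congruence.
Variables (K N : X -> Prop) (sN : subgroup N).
Hypothesis nN : normalizes K N.

Lemma eqmodM p q r s :
  K r -> eqmod N p q -> eqmod N r s -> eqmod N (p * r) (q * s).
Proof.
move=> Kr Npq Nrs; rewrite /eqmod.
have -> : (p * r)^-1 * (q * s) = (p^-1 * q) ^ r * (r^-1 * s) by rewrite /conjg !gnorm.
by apply: (subgroupM sN) => //; apply: nN.
Qed.

Lemma eqmodX u v e : K u -> eqmod N u v -> eqmod N (u ^+ e) (v ^+ e).
Proof.
move=> Ku Nuv; elim: e => [|e IHe]; last by rewrite !expgSr; apply: eqmodM.
by rewrite /eqmod !expg0 invg1 mulg1; apply: (subgroup1 sN).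
Qed.

Lemma torsion_mod_eqmod u v : K u -> eqmod N u v -> torsion_mod N u -> torsion_mod N v.
Proof.
move=> Ku Nuv [k [k_gt0 Nuk]]; exists k; split=> //.
by rewrite -(mulVKg (u ^+ k) (v ^+ k)); apply: (subgroupM sN) => //; apply: eqmodX.
Qed.

Lemma torsion_modJ x g : K g -> torsion_mod N x -> torsion_mod N (x ^ g).
Proof. by move=> Kg [k [k_gt0 Nxk]]; exists k; rewrite -conjXg; split=> //; apply: nN. Qed.

Lemma torsion_modX x e : torsion_mod N x -> torsion_mod N (x ^+ e).
Proof. by case=> k [k_gt0 Nxk]; exists k; rewrite expgnAC; split=> //; apply: subgroupX. Qed.

End Congruence.

Lemma torsion_mod_root N x e :
  (0 < e)%N -> torsion_mod N (x ^+ e) -> torsion_mod N x.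
Proof.
by move=> e_gt0 [k [k_gt0 Nxek]]; exists (e * k)%N; rewrite expgnA muln_gt0 e_gt0.
Qed.

Lemma expgM_prod_conj x y e : (x * y) ^+ e = (\prod_(i < e) x ^ (y ^- i)) * y ^+ e.
Proof.
elim: e => [|e IHe]; first by rewrite big_ord0 !expg0 mulg1.
by rewrite expgSr IHe big_ord_recr /= !expgSr /conjg !gnorm.
Qed.

Section TorsionProducts.
Variables (K N : X -> Prop) (sK : subgroup K) (sN : subgroup N).
Hypothesis nN : normalizes K N.

(* (x y)^b = (prod_(i < b) x^(y^-i)) y^b, and y^b is trivial modulo N. *)
Lemma torsion_mod_mul_of_prod x y b : K x -> K y -> (0 < b)%N -> N (y ^+ b) ->
  torsion_mod N (\prod_(i < b) x ^ (y ^- i)) -> torsion_mod N (x * y).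
Proof.
move=> Kx Ky b_gt0 Nyb Tprod; apply: (torsion_mod_root b_gt0).
rewrite expgM_prod_conj; apply: (torsion_mod_eqmod sN nN _ _ Tprod).
  apply: (big_ind K (subgroup1 sK) (subgroupM sK)) => i _.
  by apply: (subgroupJ sK) => //; apply/(subgroupV sK)/(subgroupX sK).
by rewrite /eqmod mulKg.
Qed.

Lemma torsion_mod_mulg_abelian : (forall z, lcs_in K 2 z -> N z) ->
  forall x y, K x -> K y -> torsion_mod N x -> torsion_mod N y -> torsion_mod N (x * y).
Proof.
move=> K2N x y Kx Ky Tx [b [b_gt0 Nyb]].
apply: (torsion_mod_mul_of_prod Kx Ky b_gt0 Nyb).
apply: (torsion_mod_eqmod sN nN (subgroupX sK b Kx)); last exact: torsion_modX.
elim: b {b_gt0 Nyb} => [|b IHb].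
  by rewrite big_ord0 /eqmod expg0 mulg1 invg1; apply: (subgroup1 sN).
rewrite big_ord_recr expgSr; apply: (eqmodM sN nN) => //.
rewrite /eqmod -commgEl; apply/K2N/(lcs_in_commg (n := 0)) => //.
by apply/(subgroupV sK)/(subgroupX sK).
Qed.

End TorsionProducts.

Definition adjoin_comm K x := gen_sub (fun z => z = x \/ lcs_in K 2 z).

Section AdjoinCommutators.
Variables (K : X -> Prop) (sK : subgroup K) (x : X) (Kx : K x).
Local Notation K' := (adjoin_comm K x).

Lemma adjoin_comm_sub z : K' z -> K z.
Proof. by apply: gen_sub_min sK _ z => w [-> // | Hw]; apply: (lcs_in_sub sK Hw). Qed.

Lemma adjoin_commJ g : K g -> K' (x ^ g).
Proof.
move=> Kg; rewrite conjg_mulR; apply: gen_mul; apply: gen_base; first by left.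
by right; apply: (lcs_in_commg (n := 0)).
Qed.

Lemma commg_adjoin_comm u v : K' u -> K' v -> lcs_in K 3 [~ u, v].
Proof.
have sM := lcs_in_subgroup sK 3; have nM := lcs_in_normalizes sK (n := 3).
have gen_commg s t : s = x \/ lcs_in K 2 s -> t = x \/ lcs_in K 2 t ->
    lcs_in K 3 [~ s, t].
  move=> [-> | Hs] Ht; last by apply: lcs_in_commg => //; apply/adjoin_comm_sub/gen_base.
  case: Ht => [-> | Ht]; first by rewrite commgg; apply: (subgroup1 sM).
  by rewrite -invgR; apply/(subgroupV sM)/lcs_in_commg.
move=> K'u K'v; rewrite -invgR; apply: (subgroupV sM).
have [] // := gen_sub_min (commg_subgroup u sK sM nM) _ K'v.
move=> t Ht; split; first exact/adjoin_comm_sub/gen_base.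
rewrite -invgR; apply: (subgroupV sM).
have [] // := gen_sub_min (commg_subgroup t sK sM nM) _ K'u.
by move=> s Hs; split; [apply/adjoin_comm_sub/gen_base | apply: gen_commg].
Qed.

Lemma lcs_in_adjoin_comm m z : lcs_in K' m.+2 z -> lcs_in K m.+3 z.
Proof.
elim: m z => [|m IHm] z.
  apply: gen_sub_min (lcs_in_subgroup sK 3) _ z => _ [u [v [K'u K'v ->]]].
  exact: commg_adjoin_comm.
apply: gen_sub_mono => _ [u [k [Hu K'k ->]]].
by exists u, k; split; [apply: IHm | apply: adjoin_comm_sub |].
Qed.

End AdjoinCommutators.

(* Induction on the nilpotency class of K modulo N, through the subgroups
   <x, [K, K]>, which contain all conjugates of x and have smaller class. *)
Lemma torsion_mod_mulg n K N : subgroup K -> subgroup N -> normalizes K N ->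
  (forall z, lcs_in K n.+2 z -> N z) ->
  forall x y, K x -> K y -> torsion_mod N x -> torsion_mod N y ->
  torsion_mod N (x * y).
Proof.
elim: n K => [|n IHn] K sK sN nN KnN; first exact: torsion_mod_mulg_abelian.
move=> x y Kx Ky Tx [b [b_gt0 Nyb]].
apply: (torsion_mod_mul_of_prod sK sN nN Kx Ky b_gt0 Nyb).
have K'K := adjoin_comm_sub sK Kx.
have T'M : forall u v, adjoin_comm K x u -> adjoin_comm K x v ->
    torsion_mod N u -> torsion_mod N v -> torsion_mod N (u * v).
  apply: IHn => //; first exact: gen_sub_subgroup.
    by move=> z g Nz /K'K; apply: nN.
  by move=> z /(lcs_in_adjoin_comm sK Kx) /KnN.
suff : adjoin_comm K x (\prod_(i < b) x ^ (y ^- i)) /\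
  torsion_mod N (\prod_(i < b) x ^ (y ^- i)) by case.
elim/big_ind: _.
- by split; [apply: gen_one | exists 1%N; split=> //; apply: (subgroup1 sN)].
- by move=> u v [K'u Tu] [K'v Tv]; split; [apply: gen_mul | apply: T'M].
move=> i _; have Kyi : K (y ^- i) by apply/(subgroupV sK)/(subgroupX sK).
by split; [apply: adjoin_commJ | apply: (torsion_modJ nN)].
Qed.

Lemma rlcs_subgroup n : subgroup (rlcs X n).
Proof.
have sN := lcs_subgroup X n.
split=> [|x y|x].
- by exists 1%N; split=> //; apply: (subgroup1 sN).
- case: n sN => [|[|n]] sN; try by exists 1%N.
  apply: (torsion_mod_mulg (n := n) (@subgroupT X) sN) => //.
    exact: (normal_normalizes (@lcs_normal X _)).
  by move=> z /lcs_in_whole.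
- by case=> k [k_gt0 Nxk]; exists k; rewrite expVgn; split=> //; apply: (subgroupV sN).
Qed.

End RationalLowerCentralSeries.

Section SemidirectProduct.
Variables (A C : groupType) (phi : aut_action A C).
Local Notation G := (sdprod phi).
Implicit Types (a b : A) (c d : C) (x y : G).

Lemma sdprod_mulE x y : x * y = (x.1 * phi x.2 y.1, x.2 * y.2).
Proof. by []. Qed.

Lemma sdprod_invE x : x^-1 = (phi x.2^-1 x.1^-1, x.2^-1).
Proof. by []. Qed.

Definition sdpair1 a : G := (a, 1).
Definition sdpair2 c : G := (1, c).

Lemma sdpair1M : {morph sdpair1 : a b / a * b}.
Proof. by move=> a b; rewrite sdprod_mulE /= act_one mulg1. Qed.

Lemma sdpair2M : {morph sdpair2 : c d / c * d}.
Proof. by move=> c d; rewrite sdprod_mulE /= act_1 mulg1. Qed.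

Lemma sdprod_sndM : {morph (fun x : G => x.2) : x y / x * y}.
Proof. by []. Qed.

Lemma sdprodE x : x = sdpair1 x.1 * sdpair2 x.2.
Proof. by case: x => a c; rewrite sdprod_mulE /= act_1 mulg1 mul1g. Qed.

Lemma act_lcs n c a : lcs A n a -> lcs A n (phi c a).
Proof. exact: (lcs_morph (act_morph phi c)). Qed.

Lemma sd_sub_subgroup P Q : subgroup P -> subgroup Q ->
  (forall c a, P a -> P (phi c a)) -> subgroup (sd_sub phi P Q).
Proof.
move=> sP sQ Pphi; split=> [|x y [Px1 Px2] [Py1 Py2]|x [Px1 Px2]].
- by split; [apply: (subgroup1 sP) | apply: (subgroup1 sQ)].
- by split; [apply: (subgroupM sP) => //; apply: Pphi | apply: (subgroupM sQ)].
- by split; [apply/Pphi/(subgroupV sP) | apply: (subgroupV sQ)].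
Qed.

Lemma commg_sdpair12 a c : [~ sdpair1 a, sdpair2 c] = sdpair1 (a^-1 * phi c^-1 a).
Proof.
rewrite /commg /conjg !sdprod_mulE !sdprod_invE /=.
by rewrite !invg1 !act_one !act_1 !mulg1 !mul1g mulVg.
Qed.

Lemma conjg_sdpair1 a x : sdpair1 a ^ x = sdpair1 (phi x.2^-1 (a ^ x.1)).
Proof.
rewrite /conjg !sdprod_mulE sdprod_invE /= act_one mul1g mulVg.
by rewrite -act_morph.
Qed.

Definition lcs_sdpair1 i : G -> Prop := sd_sub phi (lcs A i) (fun c => c = 1).

Lemma lcs_sdpair1E i x : lcs_sdpair1 i x -> x = sdpair1 x.1.
Proof. by case=> _; case: x => a c /= ->. Qed.

Lemma lcs_sdpair1_sub i x : lcs_sdpair1 i x -> sd_sub phi (lcs A i) (lcs C i) x.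
Proof.
by case=> Hx1 Hx2; split=> //; rewrite Hx2; apply: (subgroup1 (lcs_subgroup C i)).
Qed.

Lemma lcs_sdpair1_subgroup i : subgroup (lcs_sdpair1 i).
Proof.
rewrite /lcs_sdpair1; apply: (sd_sub_subgroup (lcs_subgroup A i) _ (@act_lcs i)).
by split=> [|c d -> ->|c ->]; rewrite ?mulg1 ?invg1.
Qed.

Lemma lcs_sdpair1_normal i : normal (lcs_sdpair1 i).
Proof.
move=> z g Hz; rewrite (lcs_sdpair1E Hz) conjg_sdpair1; split=> //=.
by apply/act_lcs/lcs_normal; case: Hz.
Qed.

Lemma commg_lcs_sdpair1 i u b :
  lcs_sdpair1 i u -> lcs_sdpair1 i.+1 [~ u, sdpair1 b].
Proof.
move=> Hu; rewrite (lcs_sdpair1E Hu) -(morphR sdpair1M); split=> //=.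
by apply: lcs_commg; case: Hu.
Qed.

Section TrivialActionOnAbelianization.
Hypothesis act_ab_trivial : forall c a, lcs A 2 (a^-1 * phi c a).

(* The three subgroups lemma for [[a, b], c] with a, b in A and c in C. *)
Lemma commg_sdpair12_lcs i a c :
  lcs A i a -> lcs_sdpair1 i.+1 [~ sdpair1 a, sdpair2 c].
Proof.
elim: i a c => [|[|i] IHi] a c Ha;
  try by rewrite commg_sdpair12; split=> //; apply: act_ab_trivial.
have sM := lcs_sdpair1_subgroup i.+3; have nM := @lcs_sdpair1_normal i.+3.
have [] // := gen_sub_min (subgroup_preim sdpair1M
  (commg_subgroup (sdpair2 c) (@subgroupT G) sM (normal_normalizes nM))) _ Ha.
move=> _ [a' [b [Ha' ->]]]; have {}Ha' : lcs A i.+1 a' := Ha'; split=> //.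
rewrite (morphR sdpair1M) -[sdpair1 b]invgK -(morphV sdpair1M).
apply: hall_witt_normal => //.
  rewrite -(morphV sdpair2M) commg_sdpair12 -(morphR sdpair1M); split=> //.
  exact: (lcs_commg_lcs (i := 2)).
rewrite -(morphV sdpair1M) -[[~ sdpair2 c, _]]invgR.
apply/commg_lcs_sdpair1/(subgroupV (lcs_sdpair1_subgroup _))/IHi.
exact: (subgroupV (lcs_subgroup A _)).
Qed.

Lemma lcs_sdpair1_central_filtration : central_filtration lcs_sdpair1.
Proof.
split; [exact: lcs_sdpair1_subgroup | exact: lcs_sdpair1_normal |].
move=> i u y Hu; rewrite (sdprodE y) commgMJ.
apply: (subgroupM (lcs_sdpair1_subgroup _)).
  by rewrite (lcs_sdpair1E Hu); apply: commg_sdpair12_lcs; case: Hu.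
by apply/lcs_sdpair1_normal/commg_lcs_sdpair1.
Qed.

Lemma commg_sd_lcs n x y : sd_sub phi (lcs A n) (lcs C n) x ->
  sd_sub phi (lcs A n.+1) (lcs C n.+1) [~ x, y].
Proof.
case: n => [|n] [Hx1 Hx2]; first by [].
have sS := sd_sub_subgroup (lcs_subgroup A n.+2) (lcs_subgroup C n.+2) (@act_lcs _).
have [sF nF cF] := lcs_sdpair1_central_filtration.
rewrite (sdprodE x) commMgJ; apply: (subgroupM sS).
  by apply/lcs_sdpair1_sub/nF/cF; split.
rewrite (sdprodE y) commgMJ -(morphR sdpair2M); apply: (subgroupM sS).
  by split; [apply: (subgroup1 (lcs_subgroup A _)) | apply: lcs_commg].
apply/lcs_sdpair1_sub/nF; rewrite -invgR; apply: (subgroupV (sF _)).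
apply: (central_filtration_commg_lcs lcs_sdpair1_central_filtration (i := 1)).
  by split.
exact: (lcs_morph sdpair2M).
Qed.

Lemma lcs_sdprod n x : lcs G n x <-> sd_sub phi (lcs A n) (lcs C n) x.
Proof.
split=> [|[Hx1 Hx2]].
  apply: (lcs_sub_filtration (F := fun n => sd_sub phi (lcs A n) (lcs C n))) => //.
    by move=> i; apply: sd_sub_subgroup (lcs_subgroup A i) (lcs_subgroup C i) (@act_lcs i).
  exact: commg_sd_lcs.
rewrite (sdprodE x); apply: (subgroupM (lcs_subgroup G n)).
  exact: (lcs_morph sdpair1M).
exact: (lcs_morph sdpair2M).
Qed.

Lemma rlcs_sdprod n x : rlcs G n x <-> sd_sub phi (rlcs A n) (rlcs C n) x.
Proof.
have sD := rlcs_subgroup G n.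
split=> [Dx | [Dx1 Dx2]]; last first.
  rewrite (sdprodE x); apply: (subgroupM sD).
    exact: (rlcs_morph sdpair1M).
  exact: (rlcs_morph sdpair2M).
have Dx2 : rlcs C n x.2 := rlcs_morph sdprod_sndM Dx; split=> //.
have : rlcs G n (sdpair1 x.1).
  have -> : sdpair1 x.1 = x * (sdpair2 x.2)^-1 by apply: (canRL (mulgK _)); rewrite -sdprodE.
  by apply: (subgroupM sD) => //; apply/(subgroupV sD)/(rlcs_morph sdpair2M).
case=> k [k_gt0]; rewrite -(morphX sdpair1M) => /lcs_sdprod [Hk _].
by exists k.
Qed.

End TrivialActionOnAbelianization.

End SemidirectProduct.

Theorem proposition3p2 (A C : groupType) (phi : aut_action A C)
  (htriv : forall (c : C) (a : A), lcs A 2 (a^-1 * phi c a)) :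
  forall m : nat, (1 <= m)%N ->
    (forall x : sdprod phi, lcs (sdprod phi) m x <-> sd_sub phi (lcs A m) (lcs C m) x) /\
    (forall x : sdprod phi, rlcs (sdprod phi) m x <-> sd_sub phi (rlcs A m) (rlcs C m) x).
Proof.
move=> m _; split=> x; [exact: (lcs_sdprod htriv) | exact: (rlcs_sdprod htriv)].
Qed.
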